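(* Suppose Assumptions 1, 2 and 3 hold and problem (P) is feasible (equivalently $\sum_i(\underline{x}_i-\phi_i(\underline{x}_i))\le\sum_i d_i\le\sum_i(\bar{x}_i-\phi_i(\bar{x}_i))$). Consider the distributed dynamics, for $i=1,\dots,N$, $$\dot{\lambda}_i=d_i-\hat{x}_i(\lambda_i)+\phi_i\big(\hat{x}_i(\lambda_i)\big)+k\sum_{j\in\mathcal{N}_i}(\lambda_j-\lambda_i),\qquad x_i(t)=\hat{x}_i(\lambda_i(t)),$$ with coupling gain $k>0$. Then for every $k>0$ and every initial condition $(\lambda_1(0),\dots,\lambda_N(0))\in\mathbb{R}^N$, the solution $(\lambda_1(t),\dots,\lambda_N(t))$ converges to a point as $t\to\infty$, and $$\lim_{t\to\infty}\sum_{i=1}^N\Big(x_i(t)-\phi_i\big(x_i(t)\big)\Big)=\sum_{i=1}^N d_i.$$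
   Context: For $i=1,\dots,N$: $d_i\in\mathbb{R}$, $\mathcal{X}_i=[\underline{x}_i,\bar{x}_i]$ a nonempty closed interval, $f_i,\phi_i:\mathbb{R}\to\mathbb{R}$. Problem (P): minimize $\sum_{i=1}^N f_i(x_i)$ subject to $\sum_{i=1}^N d_i=\sum_{i=1}^N(x_i-\phi_i(x_i))$ and $x_i\in\mathcal{X}_i$ for all $i$. Assumption 1: for each $i$, $f_i$ and $\phi_i$ are continuously differentiable, $f_i$ is strictly convex on $\mathcal{X}_i$, $\phi_i$ is convex on $\mathcal{X}_i$, and $\phi_i'(x_i)<1$ for all $x_i\in\mathcal{X}_i$. Assumption 2: $f_i'(x_i)>0$ for all $x_i\in\mathcal{X}_i$ and all $i$. Assumption 3: the communication graph $\mathcal{G}=(\{1,\dots,N\},\mathcal{E})$ is undirected and connected; $\mathcal{N}_i=\{j:(j,i)\in\mathcal{E}\}$. Let $v_i(x_i)=f_i'(x_i)(1-\phi_i'(x_i))^{-1}$ on $\mathcal{X}_i$ (strictly increasing). Define for $\lambda\in\mathbb{R}$: $\hat{x}_i(\lambda)=\underline{x}_i$ if $\lambda\le v_i(\underline{x}_i)$; $\hat{x}_i(\lambda)=v_i^{-1}(\lambda)$ if $v_i(\underline{x}_i)<\lambda<v_i(\bar{x}_i)$; $\hat{x}_i(\lambda)=\bar{x}_i$ if $\lambda\ge v_i(\bar{x}_i)$. *)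

From Stdlib Require Export Reals Lra Relations ClassicalEpsilon.
Open Scope R_scope.

(* sum_{i=0}^{n-1} g i  (indices 0..N-1 stand for 1..N) *)
Fixpoint sumN (n : nat) (g : nat -> R) : R :=
  match n with O => 0 | S m => sumN m g + g m end.

Definition convex_on (h : R -> R) (a b : R) : Prop :=
  forall x y t, a <= x <= b -> a <= y <= b -> 0 <= t <= 1 ->
    h (t * x + (1 - t) * y) <= t * h x + (1 - t) * h y.

Definition strictly_convex_on (h : R -> R) (a b : R) : Prop :=
  forall x y t, a <= x <= b -> a <= y <= b -> x <> y -> 0 < t < 1 ->
    h (t * x + (1 - t) * y) < t * h x + (1 - t) * h y.

(* v_i(x) = f_i'(x) (1 - phi_i'(x))^{-1}, given the derivatives fd, phid *)
Definition vfun (fd phid : R -> R) (x : R) : R := fd x / (1 - phid x).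

(* \hat x_i(lambda), with v_i^{-1} realized by Hilbert choice on [lo,hi] *)
Definition xhat (fd phid : R -> R) (lo hi lam : R) : R :=
  if Rle_dec lam (vfun fd phid lo) then lo
  else if Rle_dec (vfun fd phid hi) lam then hi
  else epsilon (inhabits 0) (fun x => lo <= x <= hi /\ vfun fd phid x = lam).

Definition cv_infty_fun (g : R -> R) (l : R) : Prop :=
  forall eps, 0 < eps -> exists T, forall t, T <= t -> Rabs (g t - l) < eps.

(* Write g_i(λ) = x̂_i(λ) - φ_i(x̂_i(λ)) for the net output of agent i at price λ
   and L for the Laplacian of the communication graph, so that the dynamics read
   λ' = d - g(λ) - k L λ.  The proof has five steps.
   1. Convexity makes v_i = f_i'/(1 - φ_i') strictly increasing, so x̂_i is a
      continuous clamped inverse of v_i; x̂_i(λ) maximizes the profit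
      λ (x - φ_i x) - f_i x, hence g_i is nondecreasing, continuous, and constant
      below v_i(x_lo) and above v_i(x_hi).
   2. On a connected graph L p = e is solvable whenever Σ e = 0 (Kron reduction).
      With feasibility this yields ordered sub- and super-solutions of
      d - g(μ) - k L μ = 0, and a monotone iteration between them an equilibrium μ.
   3. For every equilibrium ν, |λ - ν|^2 decreases at rate 2 D, where the
      dissipation D = Σ (λ_i - ν_i)(g_i λ_i - g_i ν_i) + k/2 Σ w_ij (..)^2 >= 0.
   4. D is small at arbitrarily late times; there λ - μ is nearly a consensus
      vector, whose value clusters at some c (Bolzano-Weierstrass). Then
      μ + c 1 is again an equilibrium, and |λ - (μ + c 1)|^2 gets small and stays small.
   5. Summing the equilibrium equations gives Σ g_i(ν_i) = Σ d_i; continuity of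
      g_i transfers the limit to the net outputs. *)

From Stdlib Require Import Reals Lra Lia Relations Classical ClassicalEpsilon.
Open Scope R_scope.

Lemma sumN_ext n f g : (forall i, (i < n)%nat -> f i = g i) -> sumN n f = sumN n g.
Proof.
  induction n as [|n IH]; simpl; intros H; auto.
  rewrite IH by (intros; apply H; lia). rewrite H by lia. reflexivity.
Qed.

Lemma sumN_plus n f g : sumN n (fun i => f i + g i) = sumN n f + sumN n g.
Proof. induction n; simpl; [lra | rewrite IHn; lra]. Qed.

Lemma sumN_minus n f g : sumN n (fun i => f i - g i) = sumN n f - sumN n g.
Proof. induction n; simpl; [lra | rewrite IHn; lra]. Qed.

Lemma sumN_scal n c f : sumN n (fun i => c * f i) = c * sumN n f.
Proof. induction n; simpl; [lra | rewrite IHn; lra]. Qed.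

Lemma sumN_const n c : sumN n (fun _ => c) = INR n * c.
Proof. induction n; simpl sumN; [simpl; lra | rewrite IHn, S_INR; lra]. Qed.

Lemma sumN_le n f g : (forall i, (i < n)%nat -> f i <= g i) -> sumN n f <= sumN n g.
Proof.
  induction n as [|n IH]; simpl; intros H; [lra|].
  pose proof (IH (fun i Hi => H i ltac:(lia))). pose proof (H n ltac:(lia)). lra.
Qed.

Lemma sumN_nonneg n f : (forall i, (i < n)%nat -> 0 <= f i) -> 0 <= sumN n f.
Proof.
  intros H. replace 0 with (sumN n (fun _ => 0)) by (rewrite sumN_const; ring).
  apply sumN_le; auto.
Qed.

Lemma sumN_term_le n f i :
  (forall j, (j < n)%nat -> 0 <= f j) -> (i < n)%nat -> f i <= sumN n f.
Proof.
  induction n as [|n IH]; simpl; intros H Hi; [lia|].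
  pose proof (H n ltac:(lia)).
  destruct (Nat.eq_dec i n) as [->|Hne].
  - pose proof (sumN_nonneg n f (fun j Hj => H j ltac:(lia))). lra.
  - pose proof (IH (fun j Hj => H j ltac:(lia)) ltac:(lia)). lra.
Qed.

Lemma sumN_swap n m (f : nat -> nat -> R) :
  sumN n (fun i => sumN m (fun j => f i j)) = sumN m (fun j => sumN n (fun i => f i j)).
Proof.
  induction n; simpl.
  - rewrite sumN_const. ring.
  - rewrite IHn, <- sumN_plus. reflexivity.
Qed.

Lemma sumN_antisym n (f : nat -> nat -> R) :
  (forall i j, (i < n)%nat -> (j < n)%nat -> f i j = - f j i) ->
  sumN n (fun i => sumN n (fun j => f i j)) = 0.
Proof.
  intros H.
  assert (E : sumN n (fun i => sumN n (fun j => f i j))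
              = -1 * sumN n (fun i => sumN n (fun j => f i j))).
  { rewrite sumN_swap at 1. rewrite <- sumN_scal. apply sumN_ext; intros j Hj.
    rewrite <- sumN_scal. apply sumN_ext; intros i Hi. rewrite H by auto. ring. }
  lra.
Qed.

Lemma sumN_bound n (u : nat -> R) :
  exists B, 0 <= B /\ forall i, (i < n)%nat -> Rabs (u i) <= B.
Proof.
  exists (sumN n (fun i => Rabs (u i))). split.
  - apply sumN_nonneg; intros; apply Rabs_pos.
  - intros i Hi. apply (sumN_term_le n (fun i => Rabs (u i))); auto.
    intros; apply Rabs_pos.
Qed.

Lemma Rabs_le_between x B : Rabs x <= B -> -B <= x <= B.
Proof. unfold Rabs; destruct Rcase_abs; lra. Qed.

Lemma Rabs_lt_of_sq_lt x e : 0 < e -> x * x < e * e -> Rabs x < e.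
Proof.
  intros He H. destruct (Rle_or_lt e (Rabs x)) as [Hc|]; auto.
  assert (Rabs x * Rabs x = x * x) by (rewrite <- Rabs_mult; apply Rabs_pos_eq; nra).
  nra.
Qed.

Lemma Rabs_le_of_sq_le x B : x * x <= B -> Rabs x <= B + 1.
Proof.
  intros H. destruct (Rle_or_lt (Rabs x) 1) as [Ha|Ha].
  - assert (0 <= x * x) by apply Rle_0_sqr. lra.
  - assert (Rabs x * Rabs x = x * x) by (rewrite <- Rabs_mult; apply Rabs_pos_eq; nra).
    nra.
Qed.

Lemma mono_product_nonneg (g : R -> R) x y :
  (forall a b, a <= b -> g a <= g b) -> 0 <= (x - y) * (g x - g y).
Proof.
  intros Hg. destruct (Rle_or_lt y x) as [H|H].
  - pose proof (Hg y x H). apply Rmult_le_pos; lra.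
  - pose proof (Hg x y ltac:(lra)). nra.
Qed.

Lemma continuity_pt_eps f x0 : continuity_pt f x0 -> forall eps, 0 < eps ->
  exists alp, 0 < alp /\ forall x, Rabs (x - x0) < alp -> Rabs (f x - f x0) < eps.
Proof.
  intros H eps He. destruct (H eps He) as [alp [Ha Hx]]. exists alp. split; auto.
  intros x Hxa. destruct (Req_dec x x0) as [->|Hne].
  - rewrite Rminus_diag, Rabs_R0; auto.
  - apply (Hx x). repeat split; auto.
Qed.

Lemma cv_infty_sumN n (u : nat -> R -> R) (l : nat -> R) :
  (forall i, (i < n)%nat -> cv_infty_fun (u i) (l i)) ->
  cv_infty_fun (fun t => sumN n (fun i => u i t)) (sumN n l).
Proof.
  induction n as [|n IH]; intros H eps He; simpl.
  - exists 0. intros. rewrite Rminus_diag, Rabs_R0. auto.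
  - destruct (IH (fun i Hi => H i ltac:(lia)) (eps/2) ltac:(lra)) as [T1 H1].
    destruct (H n ltac:(lia) (eps/2) ltac:(lra)) as [T2 H2].
    exists (Rmax T1 T2). intros t Ht.
    specialize (H1 t ltac:(pose proof (Rmax_l T1 T2); lra)).
    specialize (H2 t ltac:(pose proof (Rmax_r T1 T2); lra)).
    replace (sumN n (fun i => u i t) + u n t - (sumN n l + l n)) with
      ((sumN n (fun i => u i t) - sumN n l) + (u n t - l n)) by ring.
    eapply Rle_lt_trans; [apply Rabs_triang | lra].
Qed.

Lemma cv_infty_continuous (g : R -> R) (x : R -> R) l :
  continuity_pt g l -> cv_infty_fun x l -> cv_infty_fun (fun t => g (x t)) (g l).
Proof.
  intros Hg Hx eps He.
  destruct (continuity_pt_eps g l Hg eps He) as [alp [Ha Hc]].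
  destruct (Hx alp Ha) as [T HT]. exists T. intros t Ht. apply Hc, HT, Ht.
Qed.

Lemma Un_cv_const c : Un_cv (fun _ => c) c.
Proof. intros e He. exists 0%nat. intros. unfold R_dist. rewrite Rminus_diag, Rabs_R0. auto. Qed.

Lemma Un_cv_sumN n (u : nat -> nat -> R) (l : nat -> R) :
  (forall j, (j < n)%nat -> Un_cv (fun m => u m j) (l j)) ->
  Un_cv (fun m => sumN n (fun j => u m j)) (sumN n l).
Proof.
  induction n; intros H; simpl.
  - apply Un_cv_const.
  - apply CV_plus; [apply IHn; intros; apply H; lia | apply H; lia].
Qed.

Lemma derivable_pt_lim_sumN n (u : nat -> R -> R) (u' : nat -> R) t :
  (forall i, (i < n)%nat -> derivable_pt_lim (u i) t (u' i)) ->
  derivable_pt_lim (fun s => sumN n (fun i => u i s)) t (sumN n u').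
Proof.
  induction n; intros H; simpl.
  - apply derivable_pt_lim_const.
  - apply (derivable_pt_lim_plus (fun s => sumN n (fun i => u i s)) (u n)).
    + apply IHn; intros; apply H; lia.
    + apply H; lia.
Qed.

Lemma derivable_pt_lim_sq_shift (u : R -> R) c t l : derivable_pt_lim u t l ->
  derivable_pt_lim (fun s => (u s - c) * (u s - c)) t (2 * (u t - c) * l).
Proof.
  intros H. assert (H1 : derivable_pt_lim (fun s => u s - c) t l).
  { replace l with (l - 0) by ring.
    apply (derivable_pt_lim_minus u (fct_cte c)); auto. apply derivable_pt_lim_const. }
  replace (2 * (u t - c) * l) with (l * (u t - c) + (u t - c) * l) by ring.
  exact (derivable_pt_lim_mult _ _ t l l H1 H1).
Qed.

Lemma inv_succ_small r : 0 < r -> exists n : nat, / (INR n + 1) < r.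
Proof.
  intros Hr. destruct (archimed_cor1 r Hr) as [n [Hn Hn0]]. exists n.
  eapply Rle_lt_trans; [|exact Hn]. apply Rinv_le_contravar; [apply lt_0_INR; auto | lra].
Qed.

(** ** Convex functions: derivatives are monotone *)

(* Convexity inequality between distinct points; implied by both
   [convex_on] and [strictly_convex_on]. *)
Definition convex_distinct (h : R -> R) (a b : R) : Prop :=
  forall u w t, a <= u <= b -> a <= w <= b -> u <> w -> 0 < t < 1 ->
    h (t * u + (1 - t) * w) <= t * h u + (1 - t) * h w.

Lemma convex_on_distinct h a b : convex_on h a b -> convex_distinct h a b.
Proof. intros Hc u w t Hu Hw _ Ht. apply Hc; auto; lra. Qed.

Lemma strictly_convex_on_distinct h a b :
  strictly_convex_on h a b -> convex_distinct h a b.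
Proof. intros Hc u w t Hu Hw Huw Ht. apply Rlt_le, Hc; auto. Qed.

Lemma convex_slope_left (h : R -> R) h'x a b x y :
  convex_distinct h a b -> derivable_pt_lim h x h'x ->
  a <= x -> x < y -> y <= b -> h'x <= (h y - h x) / (y - x).
Proof.
  intros Hc Hd Hax Hxy Hyb. set (s := (h y - h x) / (y - x)).
  destruct (Rle_or_lt h'x s) as [|Hlt]; auto. exfalso.
  destruct (Hd (h'x - s) ltac:(lra)) as [[del Hdel] Hq]. simpl in Hq.
  set (e := Rmin (del / 2) (y - x)).
  assert (He0 : 0 < e) by (unfold e; apply Rmin_glb_lt; lra).
  assert (Hey : e <= y - x) by apply Rmin_r.
  assert (Hed : e < del) by (unfold e; pose proof (Rmin_l (del / 2) (y - x)); lra).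
  specialize (Hq e ltac:(lra) ltac:(rewrite Rabs_pos_eq; lra)).
  assert (Hchord : (h (x + e) - h x) / e <= s).
  { destruct (Req_dec e (y - x)) as [E|E].
    - replace (x + e) with y by lra. rewrite E. unfold s. lra.
    - set (t := e / (y - x)).
      assert (Hte : e = t * (y - x)) by (unfold t; field; lra).
      assert (Ht : 0 < t < 1).
      { split; [unfold t; apply Rdiv_lt_0_compat; lra|].
        apply (Rmult_lt_reg_r (y - x)); [lra|]. rewrite <- Hte. lra. }
      pose proof (Hc y x t ltac:(lra) ltac:(lra) ltac:(lra) Ht) as Hcv.
      replace (t * y + (1 - t) * x) with (x + e) in Hcv by (rewrite Hte; ring).
      apply (Rmult_le_reg_r e); [lra|].
      replace ((h (x + e) - h x) / e * e) with (h (x + e) - h x) by (field; lra).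
      replace (s * e) with (t * (h y - h x)) by (unfold s; rewrite Hte; field; lra).
      lra. }
  apply Rabs_def2 in Hq. lra.
Qed.

Lemma convex_slope_right (h : R -> R) h'y a b x y :
  convex_distinct h a b -> derivable_pt_lim h y h'y ->
  a <= x -> x < y -> y <= b -> (h y - h x) / (y - x) <= h'y.
Proof.
  intros Hc Hd Hax Hxy Hyb. set (s := (h y - h x) / (y - x)).
  destruct (Rle_or_lt s h'y) as [|Hlt]; auto. exfalso.
  destruct (Hd (s - h'y) ltac:(lra)) as [[del Hdel] Hq]. simpl in Hq.
  set (e := Rmin (del / 2) (y - x)).
  assert (He0 : 0 < e) by (unfold e; apply Rmin_glb_lt; lra).
  assert (Hey : e <= y - x) by apply Rmin_r.
  assert (Hed : e < del) by (unfold e; pose proof (Rmin_l (del / 2) (y - x)); lra).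
  specialize (Hq (- e) ltac:(lra) ltac:(rewrite Rabs_Ropp, Rabs_pos_eq; lra)).
  assert (Hchord : s <= (h y - h (y - e)) / e).
  { destruct (Req_dec e (y - x)) as [E|E].
    - replace (y - e) with x by lra. rewrite E. unfold s. lra.
    - set (t := e / (y - x)).
      assert (Hte : e = t * (y - x)) by (unfold t; field; lra).
      assert (Ht : 0 < t < 1).
      { split; [unfold t; apply Rdiv_lt_0_compat; lra|].
        apply (Rmult_lt_reg_r (y - x)); [lra|]. rewrite <- Hte. lra. }
      pose proof (Hc x y t ltac:(lra) ltac:(lra) ltac:(lra) Ht) as Hcv.
      replace (t * x + (1 - t) * y) with (y - e) in Hcv by (rewrite Hte; ring).
      apply (Rmult_le_reg_r e); [lra|].
      replace ((h y - h (y - e)) / e * e) with (h y - h (y - e)) by (field; lra).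
      replace (s * e) with (t * (h y - h x)) by (unfold s; rewrite Hte; field; lra).
      lra. }
  replace (y + - e) with (y - e) in Hq by ring.
  replace ((h (y - e) - h y) / - e) with ((h y - h (y - e)) / e) in Hq by (field; lra).
  apply Rabs_def2 in Hq. lra.
Qed.

Lemma convex_deriv_mono (h h' : R -> R) a b x y :
  convex_on h a b -> (forall z, derivable_pt_lim h z (h' z)) ->
  a <= x -> x <= y -> y <= b -> h' x <= h' y.
Proof.
  intros Hc Hd Hax Hxy Hyb. destruct (Req_dec x y) as [->|Hne]; [lra|].
  apply convex_on_distinct in Hc.
  pose proof (convex_slope_left h (h' x) a b x y Hc (Hd x) Hax ltac:(lra) Hyb).
  pose proof (convex_slope_right h (h' y) a b x y Hc (Hd y) Hax ltac:(lra) Hyb). lra.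
Qed.

(* Strict convexity: compare both derivatives with the two half-chords. *)
Lemma strictly_convex_deriv_mono (h h' : R -> R) a b x y :
  strictly_convex_on h a b -> (forall z, derivable_pt_lim h z (h' z)) ->
  a <= x -> x < y -> y <= b -> h' x < h' y.
Proof.
  intros Hc Hd Hax Hxy Hyb.
  pose proof (strictly_convex_on_distinct h a b Hc) as Hc'.
  set (m := (x + y) / 2).
  pose proof (convex_slope_left h (h' x) a b x m Hc' (Hd x) Hax
                ltac:(unfold m; lra) ltac:(unfold m; lra)).
  pose proof (convex_slope_right h (h' y) a b m y Hc' (Hd y)
                ltac:(unfold m; lra) ltac:(unfold m; lra) Hyb).
  pose proof (Hc x y (1/2) ltac:(lra) ltac:(lra) ltac:(lra) ltac:(lra)) as Hm.
  replace (1 / 2 * x + (1 - 1 / 2) * y) with m in Hm by (unfold m; field).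
  assert (E1 : (h m - h x) / (m - x) = 2 / (y - x) * (h m - h x)) by (unfold m; field; lra).
  assert (E2 : (h y - h m) / (y - m) = 2 / (y - x) * (h y - h m)) by (unfold m; field; lra).
  assert (Hp : 0 < 2 / (y - x)) by (apply Rdiv_lt_0_compat; lra).
  assert (2 / (y - x) * (h m - h x) < 2 / (y - x) * (h y - h m))
    by (apply Rmult_lt_compat_l; lra).
  lra.
Qed.

(** ** The response of a single agent *)

Definition agent_regular (f phi fd phid : R -> R) (lo hi : R) : Prop :=
  lo <= hi /\ (forall x, derivable_pt_lim f x (fd x)) /\ continuity fd /\
  (forall x, derivable_pt_lim phi x (phid x)) /\ continuity phid /\
  strictly_convex_on f lo hi /\ convex_on phi lo hi /\
  (forall x, lo <= x <= hi -> phid x < 1) /\ (forall x, lo <= x <= hi -> 0 < fd x).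

Definition net_output (phi fd phid : R -> R) (lo hi lam : R) : R :=
  xhat fd phid lo hi lam - phi (xhat fd phid lo hi lam).

Section Agent.
Variables (f phi fd phid : R -> R) (lo hi : R).
Hypothesis Hreg : agent_regular f phi fd phid lo hi.

(* [v = f' / (1 - φ')] is strictly increasing: [f'] increases strictly,
   [φ'] increases, and [1 - φ' > 0]. *)
Lemma vfun_strict_mono x y :
  lo <= x -> x < y -> y <= hi -> vfun fd phid x < vfun fd phid y.
Proof.
  pose proof Hreg as (_ & Hf & _ & Hp & _ & Hsc & Hcv & Hp1 & Hfp).
  intros H1 H2 H3.
  pose proof (strictly_convex_deriv_mono f fd lo hi x y Hsc Hf H1 H2 H3).
  pose proof (convex_deriv_mono phi phid lo hi x y Hcv Hp H1 ltac:(lra) H3).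
  pose proof (Hp1 x ltac:(lra)). pose proof (Hp1 y ltac:(lra)).
  pose proof (Hfp x ltac:(lra)). unfold vfun, Rdiv.
  apply Rle_lt_trans with (fd x * / (1 - phid y)).
  - apply Rmult_le_compat_l; [lra|]. apply Rinv_le_contravar; lra.
  - apply Rmult_lt_compat_r; [apply Rinv_0_lt_compat|]; lra.
Qed.

Lemma vfun_le_reflect x y : lo <= x <= hi -> lo <= y <= hi ->
  vfun fd phid x <= vfun fd phid y -> x <= y.
Proof.
  intros Hx Hy Hv. destruct (Rle_or_lt x y) as [|Hlt]; auto.
  pose proof (vfun_strict_mono y x ltac:(lra) Hlt ltac:(lra)). lra.
Qed.

(* In the interior case [v(lo) < λ < v(hi)] the equation [v(x) = λ] has a root
   in [lo, hi], by the intermediate value theorem applied to [f' - λ (1 - φ')]. *)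
Lemma vfun_root lam : vfun fd phid lo < lam < vfun fd phid hi ->
  exists x, lo <= x <= hi /\ vfun fd phid x = lam.
Proof.
  pose proof Hreg as (Hlh & _ & Hfc & _ & Hpc & _ & _ & Hp1 & _).
  intros [H1 H2].
  assert (Hlt : lo < hi) by (destruct Hlh as [|E]; [auto | subst; lra]).
  set (w := fun x => fd x - lam * (1 - phid x)).
  assert (Hwc : continuity w).
  { unfold w. apply continuity_minus; auto. apply continuity_mult.
    - apply continuity_const. intros a b; auto.
    - apply continuity_minus; auto. apply continuity_const. intros a b; auto. }
  assert (Hwv : forall x, lo <= x <= hi -> w x = (1 - phid x) * (vfun fd phid x - lam)).
  { intros x Hx. pose proof (Hp1 x Hx). unfold w, vfun. field. lra. }
  pose proof (Hp1 lo ltac:(lra)). pose proof (Hp1 hi ltac:(lra)).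
  destruct (IVT w lo hi Hwc Hlt) as [z [Hz Hwz]].
  - rewrite Hwv by lra. apply Rmult_pos_neg; lra.
  - rewrite Hwv by lra. apply Rmult_lt_0_compat; lra.
  - exists z. split; auto. rewrite Hwv in Hwz by auto. pose proof (Hp1 z Hz).
    apply Rmult_integral in Hwz. destruct Hwz; lra.
Qed.

Lemma xhat_spec lam :
  let xh := xhat fd phid lo hi lam in
  (lo <= xh <= hi) /\
  (forall y, lo <= y <= hi -> vfun fd phid y <= lam -> y <= xh) /\
  (forall y, lo <= y <= hi -> lam <= vfun fd phid y -> xh <= y).
Proof.
  pose proof Hreg as [Hlh _]. unfold xhat.
  destruct (Rle_dec lam (vfun fd phid lo)) as [H1|H1].
  { split; [lra | split; intros y Hy Hv; [apply vfun_le_reflect|]; auto; lra]. }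
  destruct (Rle_dec (vfun fd phid hi) lam) as [H2|H2].
  { split; [lra | split; intros y Hy Hv; [|apply vfun_le_reflect]; auto; lra]. }
  pose proof (epsilon_spec (inhabits 0) _
                (vfun_root lam ltac:(split; apply Rnot_le_lt; auto))) as [He1 He2].
  split; auto. split; intros y Hy Hv; apply vfun_le_reflect; auto; lra.
Qed.

(* [x̂] is continuous: near [λ0], the comparison points [x̂(λ0) ± ε/2]
   trap [x̂(λ)] unless they leave [lo, hi]. *)
Lemma xhat_continuous : continuity (xhat fd phid lo hi).
Proof.
  intros l0 eps Heps.
  pose proof (xhat_spec l0) as (Hi0 & P10 & P20).
  set (x0 := xhat fd phid lo hi l0) in *.
  assert (Hup : exists d1, 0 < d1 /\
            forall l, l < l0 + d1 -> xhat fd phid lo hi l < x0 + eps).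
  { destruct (Rle_or_lt hi (x0 + eps / 2)) as [Hh|Hh].
    - exists 1. split; [lra|]. intros l _. destruct (xhat_spec l) as [Hi _]. lra.
    - set (y := x0 + eps / 2).
      assert (Hv : l0 < vfun fd phid y).
      { destruct (Rle_or_lt (vfun fd phid y) l0) as [Hc|]; auto.
        pose proof (P10 y ltac:(unfold y; lra) Hc). unfold y in *. lra. }
      exists (vfun fd phid y - l0). split; [lra|]. intros l Hl.
      destruct (xhat_spec l) as (_ & _ & P2).
      pose proof (P2 y ltac:(unfold y; lra) ltac:(lra)). unfold y in *. lra. }
  assert (Hdn : exists d2, 0 < d2 /\
            forall l, l0 - d2 < l -> x0 - eps < xhat fd phid lo hi l).
  { destruct (Rle_or_lt (x0 - eps / 2) lo) as [Hh|Hh].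
    - exists 1. split; [lra|]. intros l _. destruct (xhat_spec l) as [Hi _]. lra.
    - set (y := x0 - eps / 2).
      assert (Hv : vfun fd phid y < l0).
      { destruct (Rle_or_lt l0 (vfun fd phid y)) as [Hc|]; auto.
        pose proof (P20 y ltac:(unfold y; lra) Hc). unfold y in *. lra. }
      exists (l0 - vfun fd phid y). split; [lra|]. intros l Hl.
      destruct (xhat_spec l) as (_ & P1 & _).
      pose proof (P1 y ltac:(unfold y; lra) ltac:(lra)). unfold y in *. lra. }
  destruct Hup as [d1 [Hd1 Hu]]. destruct Hdn as [d2 [Hd2 Hd]].
  exists (Rmin d1 d2). split; [apply Rmin_glb_lt; auto|].
  intros l [_ Hl]. simpl in *. unfold R_dist in *.
  pose proof (Rmin_l d1 d2). pose proof (Rmin_r d1 d2).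
  apply Rabs_def2 in Hl. destruct Hl.
  pose proof (Hu l ltac:(lra)). pose proof (Hd l ltac:(lra)).
  apply Rabs_def1; fold x0; lra.
Qed.

(* [x̂(λ)] maximizes the profit [λ (y - φ y) - f y] over [lo, hi]: the profit
   has derivative [(1 - φ') (λ - v)], which is positive below [x̂(λ)] and
   negative above it (mean value theorem). *)
Lemma xhat_maximizes_profit lam y : lo <= y <= hi ->
  lam * (y - phi y) - f y <=
  lam * (xhat fd phid lo hi lam - phi (xhat fd phid lo hi lam))
  - f (xhat fd phid lo hi lam).
Proof.
  pose proof Hreg as (_ & Hf & _ & Hp & _ & _ & _ & Hp1 & _).
  intros Hy. pose proof (xhat_spec lam) as (Hi & P1 & P2).
  set (xh := xhat fd phid lo hi lam) in *.
  set (profit := fun z => lam * (z - phi z) - f z).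
  set (profit' := fun z => lam * (1 - phid z) - fd z).
  assert (Hd : forall z, derivable_pt_lim profit z (profit' z)).
  { intros z. unfold profit, profit'.
    replace (lam * (1 - phid z) - fd z)
      with (0 * (z - phi z) + lam * (1 - phid z) - fd z) by ring.
    apply (derivable_pt_lim_minus (fun z => lam * (z - phi z)) f); [|apply Hf].
    apply (derivable_pt_lim_mult (fun _ => lam) (fun z => z - phi z)).
    - apply derivable_pt_lim_const.
    - apply (derivable_pt_lim_minus id phi); [apply derivable_pt_lim_id | apply Hp]. }
  assert (Hsg : forall z, lo <= z <= hi ->
            profit' z = (1 - phid z) * (lam - vfun fd phid z)).
  { intros z Hz. pose proof (Hp1 z Hz). unfold profit', vfun. field. lra. }
  change (profit y <= profit xh).
  destruct (Rtotal_order y xh) as [Hlt|[E|Hgt]].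
  - destruct (MVT_cor2 profit profit' y xh Hlt (fun c _ => Hd c)) as [c [Hc1 Hc2]].
    assert (vfun fd phid c < lam).
    { destruct (Rle_or_lt lam (vfun fd phid c)) as [Hc|]; auto.
      pose proof (P2 c ltac:(lra) Hc). lra. }
    rewrite Hsg in Hc1 by lra. pose proof (Hp1 c ltac:(lra)).
    assert (0 < (1 - phid c) * (lam - vfun fd phid c) * (xh - y))
      by (repeat apply Rmult_lt_0_compat; lra).
    lra.
  - subst; lra.
  - destruct (MVT_cor2 profit profit' xh y Hgt (fun c _ => Hd c)) as [c [Hc1 Hc2]].
    assert (lam < vfun fd phid c).
    { destruct (Rle_or_lt (vfun fd phid c) lam) as [Hc|]; auto.
      pose proof (P1 c ltac:(lra) Hc). lra. }
    rewrite Hsg in Hc1 by lra. pose proof (Hp1 c ltac:(lra)).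
    assert (0 < (1 - phid c) * (vfun fd phid c - lam) * (y - xh))
      by (repeat apply Rmult_lt_0_compat; lra).
    lra.
Qed.

(* The net output is nondecreasing in the price: add the two optimality
   inequalities of [x̂(l)] and [x̂(m)]. *)
Lemma net_output_mono l m : l <= m ->
  net_output phi fd phid lo hi l <= net_output phi fd phid lo hi m.
Proof.
  intros Hlm. destruct (xhat_spec l) as [Hl _]. destruct (xhat_spec m) as [Hm _].
  pose proof (xhat_maximizes_profit m _ Hl).
  pose proof (xhat_maximizes_profit l _ Hm).
  unfold net_output. destruct Hlm as [Hlt|<-]; [nra | lra].
Qed.

Lemma net_output_continuous : continuity (net_output phi fd phid lo hi).
Proof.
  pose proof Hreg as (_ & _ & _ & Hp & _).
  intros x. unfold net_output. apply continuity_pt_minus; [apply xhat_continuous|].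
  apply (continuity_pt_comp (xhat fd phid lo hi) phi); [apply xhat_continuous|].
  apply derivable_continuous_pt. exists (phid (xhat fd phid lo hi x)). apply Hp.
Qed.

Lemma net_output_low l : l <= vfun fd phid lo ->
  net_output phi fd phid lo hi l = lo - phi lo.
Proof.
  intros H. unfold net_output, xhat.
  destruct (Rle_dec l (vfun fd phid lo)); [reflexivity | contradiction].
Qed.

Lemma net_output_high l : vfun fd phid hi <= l ->
  net_output phi fd phid lo hi l = hi - phi hi.
Proof.
  intros H. pose proof Hreg as [Hlh _]. unfold net_output, xhat.
  destruct (Rle_dec l (vfun fd phid lo)) as [H1|H1].
  - destruct Hlh as [Hlt|<-]; [|reflexivity].
    pose proof (vfun_strict_mono lo hi ltac:(lra) Hlt ltac:(lra)). lra.
  - destruct (Rle_dec (vfun fd phid hi) l); [reflexivity | contradiction].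
Qed.

End Agent.

(** ** Weighted graph Laplacians *)

Definition lap (w : nat -> nat -> R) (n : nat) (p : nat -> R) (i : nat) : R :=
  sumN n (fun j => w i j * (p i - p j)).

Definition cut_connected (w : nat -> nat -> R) (n : nat) : Prop :=
  forall S : nat -> Prop,
  (exists a, (a < n)%nat /\ S a) -> (exists b, (b < n)%nat /\ ~ S b) ->
  exists i j, (i < n)%nat /\ (j < n)%nat /\ S i /\ ~ S j /\ 0 < w i j.

Definition symmetric_weights (w : nat -> nat -> R) (n : nat) : Prop :=
  forall i j, (i < n)%nat -> (j < n)%nat -> w i j = w j i.

Definition nonneg_weights (w : nat -> nat -> R) (n : nat) : Prop :=
  forall i j, (i < n)%nat -> (j < n)%nat -> 0 <= w i j.

Lemma lap_shift w n p c i : lap w n (fun j => c + p j) i = lap w n p i.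
Proof. unfold lap. apply sumN_ext; intros; ring. Qed.

Lemma lap_expand w n p i :
  lap w n p i = p i * sumN n (w i) - sumN n (fun j => w i j * p j).
Proof. unfold lap. rewrite <- sumN_scal, <- sumN_minus. apply sumN_ext; intros; ring. Qed.

Lemma lap_minus w n x y i : lap w n x i - lap w n y i = lap w n (fun j => x j - y j) i.
Proof. unfold lap. rewrite <- sumN_minus. apply sumN_ext; intros; ring. Qed.

Lemma lap_sum_zero w n x : symmetric_weights w n -> sumN n (fun i => lap w n x i) = 0.
Proof. intros Hs. unfold lap. apply sumN_antisym. intros. rewrite Hs by auto. ring. Qed.

Lemma lap_quadratic_form w n (x : nat -> R) : symmetric_weights w n ->
  sumN n (fun i => x i * lap w n x i) =
  / 2 * sumN n (fun i => sumN n (fun j => w i j * ((x i - x j) * (x i - x j)))).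
Proof.
  intros Hs.
  rewrite (sumN_ext n _ (fun i =>
     sumN n (fun j => / 2 * (w i j * ((x i - x j) * (x i - x j)))) +
     sumN n (fun j => / 2 * (w i j * (x i * x i - x j * x j))))).
  2:{ intros i Hi. unfold lap. rewrite <- sumN_scal, <- sumN_plus.
      apply sumN_ext; intros; field. }
  rewrite sumN_plus, (sumN_antisym n (fun i j => / 2 * (w i j * (x i * x i - x j * x j)))).
  2:{ intros i j Hi Hj. rewrite Hs by auto. ring. }
  rewrite Rplus_0_r, <- sumN_scal. apply sumN_ext; intros. apply sumN_scal.
Qed.

(** ** Solving [L p = e] by Kron reduction *)

(* Eliminating vertex [m] from a graph on [0 .. m] yields the Kron-reduced
   weights on [0 .. m-1]: [w'_ij = w_ij + w_im w_jm / deg m]. *)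
Definition pivot_degree (w : nat -> nat -> R) (m : nat) : R := sumN m (fun j => w j m).

Definition kron (w : nat -> nat -> R) (m : nat) (i j : nat) : R :=
  w i j + w i m * w j m / pivot_degree w m.

Section Kron.
Variables (w : nat -> nat -> R) (m : nat).
Hypothesis Hsym : symmetric_weights w (S m).

Lemma kron_symmetric : symmetric_weights (kron w m) m.
Proof. intros i j Hi Hj. unfold kron. rewrite Hsym by lia. lra. Qed.

Hypothesis Hnn : nonneg_weights w (S m).
Hypothesis Hconn : cut_connected w (S m).
Hypothesis Hm : m <> 0%nat.

Lemma pivot_degree_pos : 0 < pivot_degree w m.
Proof.
  destruct (Hconn (fun x => x = m)) as (i & j & Hi & Hj & -> & Sj & Hw).
  - exists m. split; auto.
  - exists 0%nat. split; lia.
  - unfold pivot_degree. eapply Rlt_le_trans;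
      [|apply (sumN_term_le m (fun j => w j m) j); [intros; apply Hnn; lia | lia]].
    rewrite Hsym by lia. exact Hw.
Qed.

Lemma kron_fill_nonneg i j : (i < S m)%nat -> (j < S m)%nat ->
  0 <= w i m * w j m / pivot_degree w m.
Proof.
  intros Hi Hj. pose proof pivot_degree_pos.
  apply Rmult_le_pos; [apply Rmult_le_pos; apply Hnn; lia|].
  apply Rlt_le, Rinv_0_lt_compat; lra.
Qed.

Lemma kron_nonneg : nonneg_weights (kron w m) m.
Proof.
  intros i j Hi Hj. unfold kron.
  pose proof (Hnn i j ltac:(lia) ltac:(lia)). pose proof (kron_fill_nonneg i j ltac:(lia) ltac:(lia)).
  lra.
Qed.

(* A cut of the reduced graph is crossed either by an original edge, or by a
   path through the eliminated vertex, which becomes a fill-in edge. *)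
Lemma kron_connected : cut_connected (kron w m) m.
Proof.
  intros S [a [Ha Sa]] [b [Hb Sb]].
  pose proof pivot_degree_pos as HD.
  assert (Hedge : forall i j, (i < m)%nat -> (j < m)%nat -> 0 < w i j -> 0 < kron w m i j).
  { intros i j Hi Hj H. unfold kron. pose proof (kron_fill_nonneg i j ltac:(lia) ltac:(lia)). lra. }
  destruct (Hconn (fun x => S x \/ x = m)) as (i & j & Hi & Hj & Si & Sj & Hw).
  { exists a. split; auto. }
  { exists b. split; [lia|]. intros [H|H]; [auto | lia]. }
  assert (Hjm : (j < m)%nat) by (destruct (Nat.eq_dec j m); [exfalso; auto | lia]).
  destruct (Nat.eq_dec i m) as [->|Nim].
  2:{ destruct Si as [Si|]; [|contradiction].
      exists i, j. repeat split; auto; try lia. apply Hedge; auto; lia. }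
  destruct (Hconn (fun x => S x /\ x <> m)) as (i' & j' & Hi' & Hj' & [Si' Ni'] & Sj' & Hw').
  { exists a. repeat split; auto. lia. }
  { exists m. split; [lia|]. intros [_ H]; auto. }
  destruct (Nat.eq_dec j' m) as [->|Njm].
  - exists i', j. repeat split; auto; try lia.
    unfold kron. pose proof (Hnn i' j ltac:(lia) ltac:(lia)).
    rewrite (Hsym m j) in Hw by lia.
    assert (0 < w i' m * w j m / pivot_degree w m)
      by (apply Rdiv_lt_0_compat; auto; apply Rmult_lt_0_compat; auto).
    lra.
  - exists i', j'. repeat split; try lia.
    + exact Si'.
    + intros H. apply Sj'. split; auto.
    + apply Hedge; auto; lia.
Qed.

(* A solution of the reduced system, with the load of [m] redistributed
   in proportion to the edge weights, extends to a solution on [0 .. m]. *)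
Lemma kron_lift (e p' : nat -> R) :
  (forall i, (i < m)%nat ->
     lap (kron w m) m p' i = e i + w i m * e m / pivot_degree w m) ->
  exists p, forall i, (i < S m)%nat -> lap w (S m) p i = e i.
Proof.
  intros Hp'. pose proof pivot_degree_pos as HD.
  set (D := pivot_degree w m) in *.
  set (pm := (e m + sumN m (fun j => w j m * p' j)) / D).
  exists (fun i => if Nat.eq_dec i m then pm else p' i).
  intros i Hi. unfold lap. simpl.
  destruct (Nat.eq_dec m m) as [_|]; [|congruence].
  destruct (Nat.eq_dec i m) as [->|Nim].
  - rewrite (sumN_ext m _ (fun j => pm * w j m - w j m * p' j)).
    2:{ intros j Hj. destruct (Nat.eq_dec j m); [lia|]. rewrite Hsym by lia. ring. }
    rewrite sumN_minus, sumN_scal.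
    replace (sumN m (fun j => w j m)) with D by reflexivity.
    unfold pm. field. lra.
  - pose proof (Hp' i ltac:(lia)) as Hq.
    unfold lap, kron in Hq. fold D in Hq.
    rewrite (sumN_ext m _ (fun j => w i j * (p' i - p' j)
               + (w i m / D) * (p' i * w j m - w j m * p' j))) in Hq
      by (intros; field; lra).
    rewrite sumN_plus, sumN_scal, sumN_minus, sumN_scal in Hq.
    change (sumN m (fun j => w j m)) with D in Hq.
    rewrite (sumN_ext m _ (fun j => w i j * (p' i - p' j))).
    2:{ intros j Hj. destruct (Nat.eq_dec j m); [lia|]. reflexivity. }
    assert (Hpm : sumN m (fun j => w j m * p' j) = pm * D - e m) by (unfold pm; field; lra).
    rewrite Hpm in Hq.
    assert (E : w i m / D * (p' i * D - (pm * D - e m))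
                = w i m * (p' i - pm) + w i m * e m / D) by (field; lra).
    rewrite E in Hq. lra.
Qed.

End Kron.

Lemma lap_solvable n : forall w, symmetric_weights w n -> nonneg_weights w n ->
  cut_connected w n ->
  forall e, sumN n e = 0 -> exists p, forall i, (i < n)%nat -> lap w n p i = e i.
Proof.
  induction n as [|m IH]; intros w Hs Hn Hc e He.
  { exists (fun _ => 0). intros; lia. }
  destruct (Nat.eq_dec m 0) as [->|Hm].
  { exists (fun _ => 0). intros i Hi. replace i with 0%nat by lia.
    simpl in He. unfold lap. simpl. lra. }
  pose proof (pivot_degree_pos w m Hs Hn Hc Hm) as HD.
  destruct (IH (kron w m) (kron_symmetric w m Hs) (kron_nonneg w m Hs Hn Hc Hm)
              (kron_connected w m Hs Hn Hc Hm)
              (fun i => e i + w i m * e m / pivot_degree w m)) as [p' Hp'].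
  - rewrite sumN_plus.
    rewrite (sumN_ext m (fun i => w i m * e m / pivot_degree w m)
               (fun i => e m / pivot_degree w m * w i m)) by (intros; field; lra).
    rewrite sumN_scal. fold (pivot_degree w m). simpl in He. field_simplify; lra.
  - exact (kron_lift w m Hs Hn Hc Hm e p' Hp').
Qed.

(** ** Equilibria of the Laplacian-coupled dynamics *)

Definition drift (N : nat) (d : nat -> R) (g : nat -> R -> R) (w : nat -> nat -> R)
  (k : R) (x : nat -> R) (i : nat) : R :=
  d i - g i (x i) - k * lap w N x i.

(* Monotone iteration: if [ψ_i] are increasing homeomorphisms of [R] and
   [rhs] is monotone and continuous, a sub-solution [a] below a super-solution
   [b] of [ψ_i(x_i) = rhs(x)_i] generates a nondecreasing sequence
   [ψ(x_{n+1}) = rhs(x_n)] bounded by [b], whose limit is a solution. *)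
Section MonotoneIteration.
Variable N : nat.
Variables (psi : nat -> R -> R) (rhs : (nat -> R) -> nat -> R) (a b : nat -> R).
Hypothesis psi_cont : forall i, (i < N)%nat -> continuity (psi i).
Hypothesis psi_reflect : forall i, (i < N)%nat -> forall y y', psi i y <= psi i y' -> y <= y'.
Hypothesis psi_onto : forall i, (i < N)%nat -> forall r, exists y, psi i y = r.
Hypothesis rhs_mono : forall x y i, (i < N)%nat ->
  (forall j, (j < N)%nat -> x j <= y j) -> rhs x i <= rhs y i.
Hypothesis rhs_cont : forall (X : nat -> nat -> R) l i, (i < N)%nat ->
  (forall j, (j < N)%nat -> Un_cv (fun n => X n j) (l j)) ->
  Un_cv (fun n => rhs (X n) i) (rhs l i).
Hypothesis a_le_b : forall i, (i < N)%nat -> a i <= b i.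
Hypothesis a_sub : forall i, (i < N)%nat -> psi i (a i) <= rhs a i.
Hypothesis b_super : forall i, (i < N)%nat -> rhs b i <= psi i (b i).

Definition psi_inv (i : nat) (r : R) : R := epsilon (inhabits 0) (fun y => psi i y = r).

Lemma psi_inv_spec i r : (i < N)%nat -> psi i (psi_inv i r) = r.
Proof. intros Hi. apply (epsilon_spec (inhabits 0) (fun y => psi i y = r)), psi_onto, Hi. Qed.

Fixpoint iterate (n : nat) : nat -> R :=
  match n with O => a | S m => fun i => psi_inv i (rhs (iterate m) i) end.

Lemma iterate_mono n i : (i < N)%nat -> iterate n i <= iterate (S n) i <= b i.
Proof.
  revert i. induction n as [|n IH]; intros i Hi.
  - simpl. split; apply (psi_reflect i Hi); rewrite psi_inv_spec by auto.
    + apply a_sub, Hi.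
    + pose proof (rhs_mono a b i Hi a_le_b). pose proof (b_super i Hi). lra.
  - change (iterate (S (S n)) i) with (psi_inv i (rhs (iterate (S n)) i)).
    change (iterate (S n) i) with (psi_inv i (rhs (iterate n) i)).
    split; apply (psi_reflect i Hi); rewrite !psi_inv_spec by auto.
    + apply rhs_mono; auto. intros; apply IH; auto.
    + pose proof (rhs_mono (iterate (S n)) b i Hi (fun j Hj => proj2 (IH j Hj))).
      pose proof (b_super i Hi). lra.
Qed.

Lemma iterate_converges :
  exists mu, forall i, (i < N)%nat -> Un_cv (fun n => iterate n i) (mu i).
Proof.
  exists (fun i => epsilon (inhabits 0) (fun l => Un_cv (fun n => iterate n i) l)).
  intros i Hi. apply (epsilon_spec (inhabits 0) (fun l => Un_cv (fun n => iterate n i) l)).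
  destruct (growing_cv (fun n => iterate n i)) as [l Hl].
  - intros n. apply iterate_mono, Hi.
  - exists (b i). intros x [n ->]. destruct n as [|n].
    + apply a_le_b, Hi.
    + apply iterate_mono, Hi.
  - exists l. exact Hl.
Qed.

Lemma monotone_iteration_solution :
  exists mu, forall i, (i < N)%nat -> psi i (mu i) = rhs mu i.
Proof.
  destruct iterate_converges as [mu Hmu]. exists mu. intros i Hi.
  assert (Hleft : Un_cv (fun n => psi i (iterate (S n) i)) (psi i (mu i))).
  { apply continuity_seq; [apply psi_cont, Hi|].
    intros e He. destruct (Hmu i Hi e He) as [M HM]. exists M. intros n Hn. apply HM. lia. }
  assert (Hright : Un_cv (fun n => psi i (iterate (S n) i)) (rhs mu i)).
  { intros e He. destruct (rhs_cont iterate mu i Hi Hmu e He) as [M HM].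
    exists M. intros n Hn. simpl. rewrite psi_inv_spec by auto. apply HM, Hn. }
  exact (UL_sequence _ _ _ Hleft Hright).
Qed.

End MonotoneIteration.

Lemma bounded_plus_linear_onto (g : R -> R) glo ghi c :
  continuity g -> (forall x, glo <= g x <= ghi) -> 1 <= c ->
  forall r, exists y, g y + c * y = r.
Proof.
  intros Hgc Hb Hc r.
  set (y1 := (r - ghi) / c - 1). set (y2 := (r - glo) / c + 1).
  assert (E1 : c * y1 = r - ghi - c) by (unfold y1; field; lra).
  assert (E2 : c * y2 = r - glo + c) by (unfold y2; field; lra).
  assert (Hy12 : y1 < y2) by (destruct (Hb 0); apply (Rmult_lt_reg_l c); lra).
  destruct (IVT (fun y => g y + c * y - r) y1 y2) as [z [_ Hz]]; auto.
  - apply continuity_minus; [apply continuity_plus|]; auto.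
    + apply continuity_mult; [|apply derivable_continuous, derivable_id].
      apply continuity_const; intros ? ?; auto.
    + apply continuity_const; intros ? ?; auto.
  - destruct (Hb y1). lra.
  - destruct (Hb y2). lra.
  - exists z. lra.
Qed.

Section Equilibrium.
Variables (N : nat) (d glo ghi vlo vhi : nat -> R) (g : nat -> R -> R).
Variables (w : nat -> nat -> R) (k : R).
Hypothesis g_cont : forall i, (i < N)%nat -> continuity (g i).
Hypothesis g_mono : forall i, (i < N)%nat -> forall x y, x <= y -> g i x <= g i y.
Hypothesis g_low : forall i, (i < N)%nat -> forall x, x <= vlo i -> g i x = glo i.
Hypothesis g_high : forall i, (i < N)%nat -> forall x, vhi i <= x -> g i x = ghi i.
Hypothesis w_sym : symmetric_weights w N.
Hypothesis w_nonneg : nonneg_weights w N.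
Hypothesis w_conn : cut_connected w N.
Hypothesis k_pos : 0 < k.
Hypothesis feasible_low : sumN N glo <= sumN N d.
Hypothesis feasible_high : sumN N d <= sumN N ghi.

Lemma g_bounds i x : (i < N)%nat -> glo i <= g i x <= ghi i.
Proof.
  intros Hi. split.
  - rewrite <- (g_low i Hi (Rmin x (vlo i))) by apply Rmin_r. apply g_mono; auto. apply Rmin_l.
  - rewrite <- (g_high i Hi (Rmax x (vhi i))) by apply Rmax_r. apply g_mono; auto. apply Rmax_l.
Qed.

(* Feasibility gives ordered sub- and super-solutions: shift a solution of
   [k L p = d - glo - s] (resp. [d - ghi + s']) far enough down (resp. up) that
   all outputs saturate; the slack [s] is the mean of [Σ d - Σ glo]. *)
Lemma sub_super_solutions : (0 < N)%nat -> exists a b : nat -> R,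
  (forall i, (i < N)%nat -> a i <= b i) /\
  (forall i, (i < N)%nat -> 0 <= drift N d g w k a i) /\
  (forall i, (i < N)%nat -> drift N d g w k b i <= 0).
Proof.
  intros HN0. assert (HN : 0 < INR N) by (apply lt_0_INR; lia).
  set (s := (sumN N d - sumN N glo) / INR N).
  set (s' := (sumN N ghi - sumN N d) / INR N).
  assert (Hs : 0 <= s) by (apply Rmult_le_pos; [lra | apply Rlt_le, Rinv_0_lt_compat; lra]).
  assert (Hs' : 0 <= s') by (apply Rmult_le_pos; [lra | apply Rlt_le, Rinv_0_lt_compat; lra]).
  destruct (lap_solvable N w w_sym w_nonneg w_conn (fun i => (d i - glo i - s) / k)) as [p Hp].
  { rewrite (sumN_ext _ _ (fun i => / k * (d i - glo i - s))) by (intros; unfold Rdiv; ring).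
    rewrite sumN_scal, !sumN_minus, sumN_const. unfold s. field_simplify; lra. }
  destruct (lap_solvable N w w_sym w_nonneg w_conn (fun i => (d i - ghi i + s') / k)) as [q Hq].
  { rewrite (sumN_ext _ _ (fun i => / k * (d i - ghi i + s'))) by (intros; unfold Rdiv; ring).
    rewrite sumN_scal, sumN_plus, !sumN_minus, sumN_const. unfold s'. field_simplify; lra. }
  destruct (sumN_bound N (fun i => Rabs (p i) + Rabs (q i) + Rabs (vlo i) + Rabs (vhi i)))
    as [B [HB0 HB]].
  assert (HBi : forall i, (i < N)%nat ->
            -B <= p i <= B /\ -B <= q i <= B /\ -B <= vlo i <= B /\ -B <= vhi i <= B).
  { intros i Hi. specialize (HB i Hi). apply Rabs_le_between in HB.
    pose proof (Rabs_pos (p i)); pose proof (Rabs_pos (q i));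
    pose proof (Rabs_pos (vlo i)); pose proof (Rabs_pos (vhi i)).
    split; [|split; [|split]]; apply Rabs_le_between; lra. }
  exists (fun i => - (3 * B) + p i), (fun i => 3 * B + q i). repeat split.
  - intros i Hi. destruct (HBi i Hi) as (H1 & H2 & _). lra.
  - intros i Hi. unfold drift. rewrite lap_shift, Hp by auto.
    destruct (HBi i Hi) as (H1 & _ & H3 & _). rewrite g_low by (auto; lra).
    field_simplify; lra.
  - intros i Hi. unfold drift. rewrite lap_shift, Hq by auto.
    destruct (HBi i Hi) as (_ & H2 & _ & H4). rewrite g_high by (auto; lra).
    field_simplify; lra.
Qed.

(* An equilibrium exists: write [drift(x)_i = rhs(x)_i - ψ_i(x_i)] with
   [ψ_i(y) = g_i(y) + (k deg_i + 1) y] increasing and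
   [rhs(x)_i = d_i + k Σ_j w_ij x_j + x_i] monotone, and iterate. *)
Lemma equilibrium_exists :
  exists mu, forall i, (i < N)%nat -> drift N d g w k mu i = 0.
Proof.
  destruct (Nat.eq_dec N 0) as [->|HN].
  { exists (fun _ => 0). intros; lia. }
  destruct (sub_super_solutions ltac:(lia)) as (a & b & Hab & Ha & Hb).
  set (c := fun i => k * sumN N (w i) + 1).
  assert (Hc : forall i, (i < N)%nat -> 1 <= c i).
  { intros i Hi. unfold c.
    assert (0 <= sumN N (w i)) by (apply sumN_nonneg; intros; apply w_nonneg; auto). nra. }
  set (psi := fun i y => g i y + c i * y).
  set (rhs := fun x i => d i + k * sumN N (fun j => w i j * x j) + x i).
  assert (Hsplit : forall x i, drift N d g w k x i = rhs x i - psi i (x i)).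
  { intros x i. unfold drift, rhs, psi, c. rewrite lap_expand. ring. }
  destruct (monotone_iteration_solution N psi rhs a b) as [mu Hmu].
  - intros i Hi. apply continuity_plus; [apply g_cont, Hi|].
    apply continuity_mult; [|apply derivable_continuous, derivable_id].
    apply continuity_const; intros ? ?; auto.
  - intros i Hi y y' H. destruct (Rle_or_lt y y') as [|Hlt]; auto.
    pose proof (g_mono i Hi y' y ltac:(lra)). pose proof (Hc i Hi). unfold psi in *. nra.
  - intros i Hi. apply (bounded_plus_linear_onto (g i) (glo i) (ghi i)); auto.
    intros; apply g_bounds, Hi.
  - intros x y i Hi H. unfold rhs. pose proof (H i Hi).
    assert (sumN N (fun j => w i j * x j) <= sumN N (fun j => w i j * y j)).
    { apply sumN_le; intros j Hj. apply Rmult_le_compat_l; auto. }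
    nra.
  - intros X l i Hi HX. unfold rhs. apply CV_plus; [apply CV_plus|]; auto.
    + apply Un_cv_const.
    + apply CV_mult; [apply Un_cv_const|].
      apply (Un_cv_sumN N (fun n j => w i j * X n j) (fun j => w i j * l j)). intros j Hj.
      apply CV_mult; [apply Un_cv_const | apply HX, Hj].
  - exact Hab.
  - intros i Hi. pose proof (Ha i Hi) as Hai. rewrite Hsplit in Hai. lra.
  - intros i Hi. pose proof (Hb i Hi) as Hbi. rewrite Hsplit in Hbi. lra.
  - exists mu. intros i Hi. rewrite Hsplit, Hmu by auto. ring.
Qed.

End Equilibrium.

(** ** A Lyapunov function *)

Definition sq_dist (N : nat) (nu x : nat -> R) : R :=
  sumN N (fun i => (x i - nu i) * (x i - nu i)).

Definition disagreement (N : nat) (w : nat -> nat -> R) (y : nat -> R) : R :=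
  sumN N (fun i => sumN N (fun j => w i j * ((y i - y j) * (y i - y j)))).

(* Rate of decrease of [|λ - ν|^2 / 2] along the dynamics, for an equilibrium [ν]. *)
Definition dissipation (N : nat) (g : nat -> R -> R) (w : nat -> nat -> R) (k : R)
  (nu x : nat -> R) : R :=
  sumN N (fun i => (x i - nu i) * (g i (x i) - g i (nu i))) +
  k / 2 * disagreement N w (fun i => x i - nu i).

Lemma sq_dist_nonneg N nu x : 0 <= sq_dist N nu x.
Proof. apply sumN_nonneg. intros. apply Rle_0_sqr. Qed.

Lemma sq_dist_term_le N nu x i : (i < N)%nat -> (x i - nu i) * (x i - nu i) <= sq_dist N nu x.
Proof.
  intros Hi. apply (sumN_term_le N (fun i => (x i - nu i) * (x i - nu i))); auto.
  intros; apply Rle_0_sqr.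
Qed.

Lemma sq_dist_small N nu : forall eps, 0 < eps -> exists del, 0 < del /\
  forall x, (forall i, (i < N)%nat -> Rabs (x i - nu i) < del) -> sq_dist N nu x < eps.
Proof.
  intros eps He. pose proof (pos_INR N).
  set (del := Rmin 1 (eps / (INR N + 1))).
  assert (Hd0 : 0 < del) by (apply Rmin_glb_lt; [lra | apply Rdiv_lt_0_compat; lra]).
  assert (Hd1 : del <= 1) by apply Rmin_l.
  assert (Hd2 : del * (INR N + 1) <= eps).
  { pose proof (Rmin_r 1 (eps / (INR N + 1))) as Hr.
    apply (Rmult_le_compat_r (INR N + 1)) in Hr; [|lra].
    replace (eps / (INR N + 1) * (INR N + 1)) with eps in Hr by (field; lra). exact Hr. }
  exists del. split; auto. intros x Hx.
  apply Rle_lt_trans with (sumN N (fun _ => del * del)).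
  - apply sumN_le. intros i Hi. specialize (Hx i Hi). apply Rabs_def2 in Hx. nra.
  - rewrite sumN_const. nra.
Qed.

Lemma disagreement_nonneg N w y : nonneg_weights w N -> 0 <= disagreement N w y.
Proof.
  intros Hw. apply sumN_nonneg; intros i Hi. apply sumN_nonneg; intros j Hj.
  apply Rmult_le_pos; [apply Hw; auto | apply Rle_0_sqr].
Qed.

Lemma disagreement_edge_le N w y a b : nonneg_weights w N ->
  (a < N)%nat -> (b < N)%nat -> 1 <= w a b ->
  (y a - y b) * (y a - y b) <= disagreement N w y.
Proof.
  intros Hw Ha Hb Hab. unfold disagreement.
  eapply Rle_trans; [|apply (sumN_term_le N _ a); auto].
  2:{ intros; apply sumN_nonneg; intros; apply Rmult_le_pos; [apply Hw; auto | apply Rle_0_sqr]. }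
  eapply Rle_trans; [|apply (sumN_term_le N (fun j => w a j * ((y a - y j) * (y a - y j))) b); auto].
  - pose proof (Rle_0_sqr (y a - y b)). unfold Rsqr in *. nra.
  - intros; apply Rmult_le_pos; [apply Hw; auto | apply Rle_0_sqr].
Qed.

Section Lyapunov.
Variables (N : nat) (d : nat -> R) (g : nat -> R -> R) (w : nat -> nat -> R) (k : R).
Hypothesis g_mono : forall i, (i < N)%nat -> forall x y, x <= y -> g i x <= g i y.
Hypothesis w_sym : symmetric_weights w N.
Hypothesis w_nonneg : nonneg_weights w N.
Hypothesis k_pos : 0 < k.

Lemma dissipation_nonneg nu x : 0 <= dissipation N g w k nu x.
Proof.
  unfold dissipation.
  pose proof (disagreement_nonneg N w (fun i => x i - nu i) w_nonneg).
  assert (0 <= sumN N (fun i => (x i - nu i) * (g i (x i) - g i (nu i)))).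
  { apply sumN_nonneg. intros i Hi. apply mono_product_nonneg, g_mono, Hi. }
  assert (0 <= k / 2) by lra. nra.
Qed.

Lemma dissipation_term_le (nu x : nat -> R) i : (i < N)%nat ->
  (x i - nu i) * (g i (x i) - g i (nu i)) <= dissipation N g w k nu x.
Proof.
  intros Hi. unfold dissipation.
  pose proof (disagreement_nonneg N w (fun i => x i - nu i) w_nonneg).
  assert (0 <= k / 2) by lra.
  pose proof (sumN_term_le N (fun j => (x j - nu j) * (g j (x j) - g j (nu j))) i
                (fun j Hj => mono_product_nonneg (g j) _ _ (g_mono j Hj)) Hi).
  simpl in *. nra.
Qed.

(* Along a solution, [d/dt |λ - ν|^2 = -2 D] for any equilibrium [ν]:
   [(λ - ν)·(g(ν) - g(λ) - k L (λ - ν))] and the quadratic form identity. *)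
Lemma sq_dist_deriv (lam : R -> nat -> R) nu t :
  (forall i, (i < N)%nat ->
     derivable_pt_lim (fun s => lam s i) t (drift N d g w k (lam t) i)) ->
  (forall i, (i < N)%nat -> drift N d g w k nu i = 0) ->
  derivable_pt_lim (fun s => sq_dist N nu (lam s)) t
    (-2 * dissipation N g w k nu (lam t)).
Proof.
  intros Hd Hnu. unfold sq_dist.
  replace (-2 * dissipation N g w k nu (lam t)) with
    (sumN N (fun i => 2 * (lam t i - nu i) * drift N d g w k (lam t) i)).
  { apply (derivable_pt_lim_sumN N (fun i s => (lam s i - nu i) * (lam s i - nu i))).
    intros i Hi. apply (derivable_pt_lim_sq_shift (fun s => lam s i)), Hd, Hi. }
  set (y := fun j => lam t j - nu j).
  rewrite (sumN_ext N _ (fun i => -2 * (y i * (g i (lam t i) - g i (nu i)))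
                                  + (-2 * k) * (y i * lap w N y i))).
  2:{ intros i Hi. rewrite <- (Rminus_0_r (drift N d g w k (lam t) i)), <- (Hnu i Hi).
      unfold drift. rewrite <- (lap_minus w N (lam t) nu). unfold y. ring. }
  rewrite sumN_plus, !sumN_scal, lap_quadratic_form by auto.
  unfold dissipation, disagreement, y. field.
Qed.

Lemma sq_dist_nonincreasing (lam : R -> nat -> R) nu s t :
  (forall i, (i < N)%nat -> forall t, 0 < t ->
     derivable_pt_lim (fun s => lam s i) t (drift N d g w k (lam t) i)) ->
  (forall i, (i < N)%nat -> drift N d g w k nu i = 0) ->
  0 < s -> s <= t -> sq_dist N nu (lam t) <= sq_dist N nu (lam s).
Proof.
  intros Hd Hnu Hs Hst. destruct Hst as [Hlt | ->]; [|lra].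
  destruct (MVT_cor2 (fun s => sq_dist N nu (lam s))
              (fun s => -2 * dissipation N g w k nu (lam s)) s t Hlt) as [c [Hc1 Hc2]].
  { intros c Hc. apply sq_dist_deriv; auto. intros; apply Hd; auto; lra. }
  pose proof (dissipation_nonneg nu (lam c)). nra.
Qed.

Lemma small_dissipation_edges nu x eta : 0 < eta ->
  dissipation N g w k nu x < k * (eta * eta) / 2 ->
  forall a b, (a < N)%nat -> (b < N)%nat -> 1 <= w a b ->
  Rabs ((x a - nu a) - (x b - nu b)) < eta.
Proof.
  intros He HD a b Ha Hb Hab. apply Rabs_lt_of_sq_lt; auto.
  pose proof (disagreement_edge_le N w (fun i => x i - nu i) a b w_nonneg Ha Hb Hab).
  assert (0 <= sumN N (fun i => (x i - nu i) * (g i (x i) - g i (nu i)))).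
  { apply sumN_nonneg. intros i Hi. apply mono_product_nonneg, g_mono, Hi. }
  unfold dissipation in HD. simpl in *. nra.
Qed.

Lemma converges_of_sq_dist_small (lam : R -> nat -> R) nu :
  (forall i, (i < N)%nat -> forall t, 0 < t ->
     derivable_pt_lim (fun s => lam s i) t (drift N d g w k (lam t) i)) ->
  (forall i, (i < N)%nat -> drift N d g w k nu i = 0) ->
  (forall eps, 0 < eps -> exists s, 0 < s /\ sq_dist N nu (lam s) < eps) ->
  forall i, (i < N)%nat -> cv_infty_fun (fun t => lam t i) (nu i).
Proof.
  intros Hd Hnu Hsmall i Hi eps He.
  destruct (Hsmall (eps * eps) ltac:(nra)) as [s [Hs HW]].
  exists s. intros t Ht. apply Rabs_lt_of_sq_lt; auto.
  pose proof (sq_dist_term_le N nu (lam t) i Hi).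
  pose proof (sq_dist_nonincreasing lam nu s t Hd Hnu Hs Ht). lra.
Qed.

End Lyapunov.

Lemma path_increment_small (E : nat -> nat -> Prop) u v :
  clos_refl_trans nat E u v -> forall eps, 0 < eps -> exists eta, 0 < eta /\
  forall x : nat -> R, (forall a b, E a b -> Rabs (x a - x b) < eta) ->
  Rabs (x v - x u) < eps.
Proof.
  induction 1 as [a b Hab | a | a b c _ IH1 _ IH2]; intros eps He.
  - exists eps. split; auto. intros x Hx. rewrite Rabs_minus_sym. auto.
  - exists 1. split; [lra|]. intros. rewrite Rminus_diag, Rabs_R0. auto.
  - destruct (IH1 (eps / 2) ltac:(lra)) as [e1 [He1 H1]].
    destruct (IH2 (eps / 2) ltac:(lra)) as [e2 [He2 H2]].
    exists (Rmin e1 e2). split; [apply Rmin_glb_lt; auto|]. intros x Hx.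
    specialize (H1 x (fun a b H => Rlt_le_trans _ _ _ (Hx a b H) (Rmin_l e1 e2))).
    specialize (H2 x (fun a b H => Rlt_le_trans _ _ _ (Hx a b H) (Rmin_r e1 e2))).
    replace (x c - x a) with ((x c - x b) + (x b - x a)) by ring.
    eapply Rle_lt_trans; [apply Rabs_triang | lra].
Qed.

Lemma paths_increment_small (E : nat -> nat -> Prop) n r :
  (forall i, (i < n)%nat -> clos_refl_trans nat E r i) ->
  forall eps, 0 < eps -> exists eta, 0 < eta /\
  forall x : nat -> R, (forall a b, E a b -> Rabs (x a - x b) < eta) ->
  forall i, (i < n)%nat -> Rabs (x i - x r) < eps.
Proof.
  induction n as [|n IH]; intros H eps He.
  - exists 1. split; [lra|]. intros; lia.
  - destruct (IH (fun i Hi => H i ltac:(lia)) eps He) as [e1 [He1 H1]].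
    destruct (path_increment_small E r n (H n ltac:(lia)) eps He) as [e2 [He2 H2]].
    exists (Rmin e1 e2). split; [apply Rmin_glb_lt; auto|]. intros x Hx i Hi.
    destruct (Nat.eq_dec i n) as [->|Hne].
    + apply H2. intros a b Hab. eapply Rlt_le_trans; [apply Hx, Hab | apply Rmin_r].
    + apply H1; [|lia]. intros a b Hab. eapply Rlt_le_trans; [apply Hx, Hab | apply Rmin_l].
Qed.

(** ** Convergence of the dynamics *)

Lemma monotone_flat (g : R -> R) m c :
  (forall x y, x <= y -> g x <= g y) -> continuity_pt g (c + m) ->
  (forall rho delta, 0 < rho -> 0 < delta ->
     exists x, Rabs (x - (c + m)) < rho /\ (x - m) * (g x - g m) < delta) ->
  g (c + m) = g m.
Proof.
  intros Hg Hgc Hnear. apply NNPP. intros Hne.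
  set (gam := c * (g (c + m) - g m)).
  assert (Hgam : 0 < gam).
  { unfold gam. destruct (Rtotal_order c 0) as [Hl|[->|Hgt]].
    - pose proof (Hg (c + m) m ltac:(lra)).
      assert (g (c + m) <> g m) by auto. nra.
    - rewrite Rplus_0_l in Hne. contradiction.
    - pose proof (Hg m (c + m) ltac:(lra)).
      assert (g (c + m) <> g m) by auto. nra. }
  set (prod := fun x => (x - m) * (g x - g m)).
  assert (Hpc : continuity_pt prod (c + m)).
  { unfold prod. apply (continuity_pt_mult (fun x => x - m) (fun x => g x - g m)).
    - apply (continuity_pt_minus (fun x => x) (fun _ => m));
        [apply derivable_continuous_pt, derivable_pt_id | apply continuity_pt_const; intros ? ?; auto].
    - apply (continuity_pt_minus g (fun _ => g m)); auto.
      apply continuity_pt_const; intros ? ?; auto. }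
  destruct (continuity_pt_eps prod (c + m) Hpc (gam / 2) ltac:(lra)) as [rho [Hrho Hcont]].
  destruct (Hnear rho (gam / 2) Hrho ltac:(lra)) as [x [Hx Hpx]].
  specialize (Hcont x Hx). fold (prod x) in Hpx.
  replace (prod (c + m)) with gam in Hcont by (unfold prod, gam; ring).
  apply Rabs_def2 in Hcont. lra.
Qed.

(* Edges of weight at least 1, along which the dissipation controls the
   disagreement. *)
Definition heavy_edge (w : nat -> nat -> R) (N a b : nat) : Prop :=
  (a < N)%nat /\ (b < N)%nat /\ 1 <= w a b.

Section Convergence.
Variables (N : nat) (d : nat -> R) (g : nat -> R -> R) (w : nat -> nat -> R) (k : R).
Variables (lam : R -> nat -> R) (mu : nat -> R).
Hypothesis N_pos : (0 < N)%nat.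
Hypothesis g_cont : forall i, (i < N)%nat -> continuity (g i).
Hypothesis g_mono : forall i, (i < N)%nat -> forall x y, x <= y -> g i x <= g i y.
Hypothesis w_sym : symmetric_weights w N.
Hypothesis w_nonneg : nonneg_weights w N.
Hypothesis paths : forall i, (i < N)%nat -> clos_refl_trans nat (heavy_edge w N) 0%nat i.
Hypothesis k_pos : 0 < k.
Hypothesis lam_deriv : forall i, (i < N)%nat -> forall t, 0 < t ->
  derivable_pt_lim (fun s => lam s i) t (drift N d g w k (lam t) i).
Hypothesis mu_eq : forall i, (i < N)%nat -> drift N d g w k mu i = 0.

Local Notation D t := (dissipation N g w k mu (lam t)).

(* [D] cannot stay above [eps] for ever: [|λ - μ|^2 >= 0] would decrease
   at rate [2 eps]. *)
Lemma dissipation_small_late eps T : 0 < eps ->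
  exists t, T <= t /\ 1 <= t /\ D t < eps.
Proof.
  intros He. apply NNPP. intros Hno.
  set (W := fun t => sq_dist N mu (lam t)).
  set (T' := Rmax T 1). pose proof (Rmax_l T 1). pose proof (Rmax_r T 1).
  assert (HW' : 0 <= W T' / (2 * eps))
    by (apply Rmult_le_pos; [apply sq_dist_nonneg | apply Rlt_le, Rinv_0_lt_compat; lra]).
  set (t2 := T' + W T' / (2 * eps) + 1).
  destruct (MVT_cor2 W (fun s => -2 * D s) T' t2 ltac:(unfold t2; lra)) as [c [Hc1 Hc2]].
  { intros c Hc. apply (sq_dist_deriv N d g w k w_sym lam mu c); auto.
    intros i Hi. apply lam_deriv; auto. unfold T' in *; lra. }
  assert (Hge : eps <= D c).
  { destruct (Rle_or_lt eps (D c)) as [|Hlt]; auto. exfalso. apply Hno.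
    exists c. unfold T' in *. repeat split; lra. }
  pose proof (sq_dist_nonneg N mu (lam t2)).
  assert (E : W T' / (2 * eps) * (2 * eps) = W T') by (field; lra).
  assert (t2 - T' = W T' / (2 * eps) + 1) by (unfold t2; ring).
  unfold W in *. nra.
Qed.

Lemma dissipation_sequence : exists tn : nat -> R,
  forall n, INR n <= tn n /\ 1 <= tn n /\ D (tn n) < / (INR n + 1).
Proof.
  exists (fun n => epsilon (inhabits 0)
            (fun t => INR n <= t /\ 1 <= t /\ D t < / (INR n + 1))).
  intros n. apply (epsilon_spec (inhabits 0)
                     (fun t => INR n <= t /\ 1 <= t /\ D t < / (INR n + 1))).
  apply dissipation_small_late. apply Rinv_0_lt_compat. pose proof (pos_INR n). lra.
Qed.

Section AlongSequence.
Variable tn : nat -> R.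
Hypothesis tn_spec : forall n, INR n <= tn n /\ 1 <= tn n /\ D (tn n) < / (INR n + 1).

(* The deviation of vertex 0 from [μ] stays bounded, as [|λ - μ|] decreases. *)
Lemma deviation_bounded n :
  - (sq_dist N mu (lam 1) + 1) <= lam (tn n) 0%nat - mu 0%nat <= sq_dist N mu (lam 1) + 1.
Proof.
  destruct (tn_spec n) as (_ & H1 & _).
  apply Rabs_le_between, Rabs_le_of_sq_le.
  eapply Rle_trans; [apply sq_dist_term_le, N_pos|].
  apply (sq_dist_nonincreasing N d g w k g_mono w_sym w_nonneg k_pos); auto. lra.
Qed.

Variable c : R.
Hypothesis c_cluster : ValAdh (fun n => lam (tn n) 0%nat - mu 0%nat) c.

(* Arbitrarily late along [tn], the dissipation is small and [λ] is close to
   the shifted equilibrium [μ + c]: edges are nearly balanced, so by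
   connectivity all deviations are close to the deviation at vertex 0,
   which is close to the cluster value [c]. *)
Lemma near_shifted_equilibrium eps r n0 : 0 < eps -> 0 < r ->
  exists n, (n0 <= n)%nat /\ D (tn n) < r /\
  forall i, (i < N)%nat -> Rabs (lam (tn n) i - (c + mu i)) < eps.
Proof.
  intros He Hr.
  destruct (paths_increment_small (heavy_edge w N) N 0%nat paths (eps / 2) ltac:(lra))
    as [eta [Heta Hclose]].
  assert (Hkr : 0 < Rmin r (k * (eta * eta) / 2))
    by (apply Rmin_glb_lt; auto; assert (0 < eta * eta) by nra; nra).
  destruct (inv_succ_small _ Hkr) as [n1 Hn1].
  assert (Hnb : neighbourhood (disc c (mkposreal (eps / 2) ltac:(lra))) c)
    by (exists (mkposreal (eps / 2) ltac:(lra)); intros x Hx; exact Hx).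
  destruct (c_cluster _ (Nat.max n0 n1) Hnb) as [p [Hp Hpc]].
  unfold disc in Hpc. simpl in Hpc.
  assert (HDp : D (tn p) < Rmin r (k * (eta * eta) / 2)).
  { destruct (tn_spec p) as (_ & _ & H3). eapply Rlt_trans; [exact H3|].
    eapply Rle_lt_trans; [|exact Hn1]. apply Rinv_le_contravar.
    - pose proof (pos_INR n1). lra.
    - apply Rplus_le_compat_r, le_INR. lia. }
  exists p. split; [lia|]. split; [eapply Rlt_le_trans; [exact HDp | apply Rmin_l]|].
  intros i Hi.
  assert (Hedges : forall a b, heavy_edge w N a b ->
            Rabs ((lam (tn p) a - mu a) - (lam (tn p) b - mu b)) < eta).
  { intros a b (Ha & Hb & Hab).
    apply (small_dissipation_edges N g w k g_mono w_nonneg); auto.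
    eapply Rlt_le_trans; [exact HDp | apply Rmin_r]. }
  pose proof (Hclose (fun j => lam (tn p) j - mu j) Hedges i Hi) as Hi0.
  simpl in Hi0.
  replace (lam (tn p) i - (c + mu i))
    with ((lam (tn p) i - mu i - (lam (tn p) 0%nat - mu 0%nat))
          + (lam (tn p) 0%nat - mu 0%nat - c)) by ring.
  eapply Rle_lt_trans; [apply Rabs_triang | lra].
Qed.

End AlongSequence.

Lemma dynamics_converge : exists nu,
  (forall i, (i < N)%nat -> drift N d g w k nu i = 0) /\
  forall i, (i < N)%nat -> cv_infty_fun (fun t => lam t i) (nu i).
Proof.
  destruct dissipation_sequence as [tn Htn].
  destruct (Bolzano_Weierstrass (fun n => lam (tn n) 0%nat - mu 0%nat) _ (compact_P3 _ _)
              (deviation_bounded tn Htn)) as [c Hc].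
  pose proof (near_shifted_equilibrium tn Htn c Hc) as Hnear.
  assert (Hflat : forall i, (i < N)%nat -> g i (c + mu i) = g i (mu i)).
  { intros i Hi. apply monotone_flat; [apply g_mono, Hi | apply g_cont, Hi|].
    intros rho delta Hrho Hdelta.
    destruct (Hnear rho delta 0%nat Hrho Hdelta) as (n & _ & HD & Hcl).
    exists (lam (tn n) i). split; [apply Hcl, Hi|].
    eapply Rle_lt_trans; [|exact HD].
    apply (dissipation_term_le N g w k g_mono w_nonneg k_pos), Hi. }
  set (nu := fun i => c + mu i).
  assert (Hnu : forall i, (i < N)%nat -> drift N d g w k nu i = 0).
  { intros i Hi. rewrite <- (mu_eq i Hi). unfold drift, nu.
    rewrite Hflat, lap_shift by auto. reflexivity. }
  exists nu. split; auto.
  apply (converges_of_sq_dist_small N d g w k g_mono w_sym w_nonneg k_pos); auto.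
  intros eps He. destruct (sq_dist_small N nu eps He) as [del [Hdel Hsmall]].
  destruct (Hnear del 1 0%nat Hdel ltac:(lra)) as (n & _ & _ & Hcl).
  exists (tn n). split; [destruct (Htn n); lra|]. apply Hsmall, Hcl.
Qed.

End Convergence.

Lemma clos_refl_trans_mono (E1 E2 : nat -> nat -> Prop) a b :
  (forall x y, E1 x y -> E2 x y) -> clos_refl_trans nat E1 a b -> clos_refl_trans nat E2 a b.
Proof.
  intros H. induction 1; [apply rt_step; auto | apply rt_refl | eapply rt_trans; eauto].
Qed.

Lemma clos_refl_trans_cut (E : nat -> nat -> Prop) (S : nat -> Prop) a b :
  clos_refl_trans nat E a b -> S a -> ~ S b -> exists i j, E i j /\ S i /\ ~ S j.
Proof.
  induction 1 as [a b Hab | a | a b c _ IH1 _ IH2]; intros Sa Sb.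
  - exists a, b. auto.
  - contradiction.
  - destruct (classic (S b)); [apply IH2 | apply IH1]; auto.
Qed.

Definition adj_weights (adj : nat -> nat -> bool) (i j : nat) : R :=
  if adj j i then 1 else 0.

Section AdjacencyGraph.
Variables (N : nat) (adj : nat -> nat -> bool).
Hypothesis adj_sym : forall i j, (i < N)%nat -> (j < N)%nat -> adj i j = adj j i.
Hypothesis adj_conn : forall i j, (i < N)%nat -> (j < N)%nat ->
  clos_refl_trans nat (fun a b => (a < N)%nat /\ (b < N)%nat /\ adj a b = true) i j.

Lemma adj_weights_symmetric : symmetric_weights (adj_weights adj) N.
Proof. intros i j Hi Hj. unfold adj_weights. rewrite adj_sym by auto. reflexivity. Qed.

Lemma adj_weights_nonneg : nonneg_weights (adj_weights adj) N.
Proof. intros i j _ _. unfold adj_weights. destruct (adj j i); lra. Qed.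

Lemma adj_edge_heavy a b : (a < N)%nat /\ (b < N)%nat /\ adj a b = true ->
  heavy_edge (adj_weights adj) N a b.
Proof.
  intros (Ha & Hb & Hab). repeat split; auto.
  unfold adj_weights. rewrite adj_sym, Hab by auto. lra.
Qed.

Lemma adj_paths i : (i < N)%nat -> clos_refl_trans nat (heavy_edge (adj_weights adj) N) 0%nat i.
Proof.
  intros Hi. apply (clos_refl_trans_mono _ _ _ _ adj_edge_heavy), adj_conn; [lia | exact Hi].
Qed.

Lemma adj_cut_connected : cut_connected (adj_weights adj) N.
Proof.
  intros S [a [Ha Sa]] [b [Hb Sb]].
  destruct (clos_refl_trans_cut _ S a b (adj_conn a b Ha Hb) Sa Sb) as (i & j & Hij & Si & Sj).
  destruct (adj_edge_heavy i j Hij) as (Hi & Hj & Hw).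
  exists i, j. repeat split; auto. lra.
Qed.

End AdjacencyGraph.

(* With net outputs and adjacency weights, [drift] is the right-hand side of
   the dispatch dynamics: the coupling [k Σ_{j ∈ N_i} (λ_j - λ_i)] is [-k (L λ)_i]. *)
Lemma dispatch_drift N d (xlo xhi : nat -> R) (phi fd phid : nat -> R -> R)
  (adj : nat -> nat -> bool) k (x : nat -> R) i :
  drift N d (fun i => net_output (phi i) (fd i) (phid i) (xlo i) (xhi i))
    (adj_weights adj) k x i
  = d i - xhat (fd i) (phid i) (xlo i) (xhi i) (x i)
    + phi i (xhat (fd i) (phid i) (xlo i) (xhi i) (x i))
    + k * sumN N (fun j => if adj j i then x j - x i else 0).
Proof.
  unfold drift, net_output, lap.
  replace (sumN N (fun j => if adj j i then x j - x i else 0))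
    with (-1 * sumN N (fun j => adj_weights adj i j * (x i - x j))); [ring|].
  rewrite <- sumN_scal. apply sumN_ext; intros j Hj. unfold adj_weights. destruct (adj j i); ring.
Qed.

(* At an equilibrium supply meets demand: sum the equations, the Laplacian
   terms cancel. *)
Lemma equilibrium_balance N d g w k nu : symmetric_weights w N ->
  (forall i, (i < N)%nat -> drift N d g w k nu i = 0) ->
  sumN N (fun i => g i (nu i)) = sumN N d.
Proof.
  intros Hs Hnu.
  assert (E : sumN N (fun i => d i - g i (nu i) + (- k) * lap w N nu i) = 0).
  { rewrite (sumN_ext N _ (fun _ => 0)) by (intros i Hi; rewrite <- (Hnu i Hi); unfold drift; ring).
    rewrite sumN_const. ring. }
  rewrite sumN_plus, sumN_minus, sumN_scal, lap_sum_zero in E by auto. lra.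
Qed.

Theorem theorem2
  (N : nat) (d xlo xhi : nat -> R) (f phi fd phid : nat -> R -> R)
  (adj : nat -> nat -> bool) (k : R) (lam : R -> nat -> R) :
  (* nonempty closed intervals *)
  (forall i, (i < N)%nat -> xlo i <= xhi i) ->
  (* Assumption 1: C^1 with derivatives fd, phid *)
  (forall i, (i < N)%nat -> forall x, derivable_pt_lim (f i) x (fd i x)) ->
  (forall i, (i < N)%nat -> continuity (fd i)) ->
  (forall i, (i < N)%nat -> forall x, derivable_pt_lim (phi i) x (phid i x)) ->
  (forall i, (i < N)%nat -> continuity (phid i)) ->
  (forall i, (i < N)%nat -> strictly_convex_on (f i) (xlo i) (xhi i)) ->
  (forall i, (i < N)%nat -> convex_on (phi i) (xlo i) (xhi i)) ->
  (forall i, (i < N)%nat -> forall x, xlo i <= x <= xhi i -> phid i x < 1) ->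
  (* Assumption 2 *)
  (forall i, (i < N)%nat -> forall x, xlo i <= x <= xhi i -> 0 < fd i x) ->
  (* Assumption 3: undirected connected graph on {0,...,N-1} *)
  (forall i j, (i < N)%nat -> (j < N)%nat -> adj i j = adj j i) ->
  (forall i j, (i < N)%nat -> (j < N)%nat ->
     clos_refl_trans nat
       (fun a b => (a < N)%nat /\ (b < N)%nat /\ adj a b = true) i j) ->
  (* feasibility of (P) *)
  sumN N (fun i => xlo i - phi i (xlo i)) <= sumN N d ->
  sumN N d <= sumN N (fun i => xhi i - phi i (xhi i)) ->
  (* coupling gain *)
  0 < k ->
  (* lam is a solution on [0, +oo) of the distributed dynamics *)
  (forall i, (i < N)%nat ->
     limit1_in (fun s => lam s i) (fun s => 0 < s) (lam 0 i) 0) ->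
  (forall i, (i < N)%nat -> forall t, 0 < t ->
     derivable_pt_lim (fun s => lam s i) t
       (d i - xhat (fd i) (phid i) (xlo i) (xhi i) (lam t i)
            + phi i (xhat (fd i) (phid i) (xlo i) (xhi i) (lam t i))
            + k * sumN N (fun j => if adj j i then lam t j - lam t i else 0))) ->
  (* conclusion *)
  (exists L : nat -> R, forall i, (i < N)%nat -> cv_infty_fun (fun t => lam t i) (L i)) /\
  cv_infty_fun
    (fun t => sumN N (fun i =>
        xhat (fd i) (phid i) (xlo i) (xhi i) (lam t i)
        - phi i (xhat (fd i) (phid i) (xlo i) (xhi i) (lam t i))))
    (sumN N d).
Proof.
  intros Hlh Hf Hfc Hp Hpc Hsc Hcv Hp1 Hfp Hadj Hconn Hfe1 Hfe2 Hk _ Hder.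
  destruct (Nat.eq_dec N 0) as [->|HN].
  { split; [exists (fun _ => 0); intros; lia|].
    intros eps He. exists 0. intros. simpl. rewrite Rminus_diag, Rabs_R0. exact He. }
  set (g := fun i => net_output (phi i) (fd i) (phid i) (xlo i) (xhi i)).
  set (w := adj_weights adj).
  assert (Hreg : forall i, (i < N)%nat ->
            agent_regular (f i) (phi i) (fd i) (phid i) (xlo i) (xhi i))
    by (intros i Hi; repeat split; auto).
  pose proof (fun i Hi => net_output_mono _ _ _ _ _ _ (Hreg i Hi)) as Hgm.
  pose proof (fun i Hi => net_output_continuous _ _ _ _ _ _ (Hreg i Hi)) as Hgc.
  pose proof (adj_weights_symmetric N adj Hadj) as Hws.
  pose proof (adj_weights_nonneg N adj) as Hwn.
  assert (Hdyn : forall i, (i < N)%nat -> forall t, 0 < t ->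
            derivable_pt_lim (fun s => lam s i) t (drift N d g w k (lam t) i))
    by (intros i Hi t Ht; unfold g, w; rewrite dispatch_drift; auto).
  destruct (equilibrium_exists N d (fun i => xlo i - phi i (xlo i))
              (fun i => xhi i - phi i (xhi i)) (fun i => vfun (fd i) (phid i) (xlo i))
              (fun i => vfun (fd i) (phid i) (xhi i)) g w k Hgc Hgm
              (fun i Hi x Hx => net_output_low _ _ _ _ _ _ Hx)
              (fun i Hi x Hx => net_output_high _ _ _ _ _ _ (Hreg i Hi) _ Hx)
              Hws Hwn (adj_cut_connected N adj Hadj Hconn) Hk Hfe1 Hfe2) as [mu Hmu].
  destruct (dynamics_converge N d g w k lam mu ltac:(lia) Hgc Hgm Hws Hwn
              (adj_paths N adj Hadj Hconn) Hk Hdyn Hmu) as [nu [Hnu Hlim]].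
  split; [exists nu; exact Hlim|].
  rewrite <- (equilibrium_balance N d g w k nu Hws Hnu).
  apply (cv_infty_sumN N (fun i t => g i (lam t i))). intros i Hi.
  apply cv_infty_continuous; [apply Hgc, Hi | apply Hlim, Hi].
Qed.
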